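(* Let $\lambda>0$, $f:\mathbb{R}^n\to\mathbb{R}$ twice continuously differentiable, $\varphi=f+\lambda\|\cdot\|_1$, and $x^0$ with $\mathcal{L}_\varphi(x^0)$ bounded and $f$ twice uniformly Lipschitz continuously differentiable on an open neighborhood of it; assume $\varphi$ has a minimizer. Let $\{x^k\}$ be generated by FPGN2CM (described in the context). Then there exists $K\in\mathbb{N}$ such that the Newton-CG step is invoked for all $k\ge K$.
   Context: $\mathcal{G}_t(x):=t(x-\mathrm{prox}_{\frac\lambda t\|\cdot\|_1}(x-\frac1t\nabla f(x)))$; $\mathrm{sgn}(0)=1$. For $x$: $I^\varepsilon_0=\{i:|x_i|\le\varepsilon_g^{1/2}\}$, $I^\varepsilon_{\neq0}=\{i:|x_i|>\varepsilon_g^{1/2}\}$; $g^\varepsilon(x)_i=(\nabla f(x))_i+\lambda$ if $x_i>\varepsilon_g^{1/2}$, $(\nabla f(x))_i-\lambda$ if $x_i<-\varepsilon_g^{1/2}$, $(\nabla f(x))_i-\min\{\max\{-\lambda-\varepsilon_g^{3/4},(\nabla f(x))_i\},\lambda+\varepsilon_g^{3/4}\}$ otherwise. Capped CG (inputs symmetric $H$, $g$, $\epsilon$, $\zeta\in(0,1)$, $\delta$, $\bar\tau$, $M\ge0$): $\bar H=H+\bar\tau\|g\|^\delta I$, $\kappa=\frac{M+\bar\tau\|g\|^\delta}\epsilon$, $\hat\zeta=\frac\zeta{3\kappa}$, $\tau=\frac{\sqrt\kappa}{\sqrt\kappa+1}$, $T=\frac{4\kappa^4}{(1-\sqrt\tau)^2}$,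 $y_0=0,r_0=g,p_0=-g$; if $p_0^\top\bar Hp_0<\epsilon\|p_0\|^2$ return $(p_0,\mathrm{NC})$; if $\|Hp_0\|>M\|p_0\|$ update $M$ and $\kappa,\hat\zeta,\tau,T$. Loop: standard CG iteration on $\bar Hy=-g$ ($\alpha_j=\|r_j\|^2/p_j^\top\bar Hp_j$, $y_{j+1}=y_j+\alpha_jp_j$, $r_{j+1}=r_j+\alpha_j\bar Hp_j$, $\beta_{j+1}=\|r_{j+1}\|^2/\|r_j\|^2$, $p_{j+1}=-r_{j+1}+\beta_{j+1}p_j$, $j\leftarrow j+1$), updating $M$ whenever $\|Hv\|>M\|v\|$ for $v\in\{p_j,y_j,r_j\}$; then if $y_j^\top\bar Hy_j<\epsilon\|y_j\|^2$ return $(y_j,\mathrm{NC})$; elif $\|r_j\|\le\hat\zeta\|r_0\|$ return $(y_j,\mathrm{SOL})$; elif $p_j^\top\bar Hp_j<\epsilon\|p_j\|^2$ return $(p_j,\mathrm{NC})$; elif $\|r_j\|>\sqrt T\tau^{j/2}\|r_0\|$, compute $y_{j+1}$, find $i<j$ with $(y_{j+1}-y_i)^\top\bar H(y_{j+1}-y_i)<\epsilon\|y_{j+1}-y_i\|^2$ and return $(y_{j+1}-y_i,\mathrm{NC})$. FPGN2CM (parameters $0<\varepsilon_g<1$, $\varepsilon_h=\varepsilon_g^{1/2}$, $\beta>1$, $\delta\in[0,1]$, $\hat\tau\ge1$, $\zeta\in(0,1)$, $\bar\eta\in(0,1)$, $\eta\in(0,\frac{1-\zeta}2)$, $\theta\in(0,1)$),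 at iteration $k$ with $I^{k\varepsilon}_0=I^\varepsilon_0(x^k)$, $I^{k\varepsilon}_{\neq0}=I^\varepsilon_{\neq0}(x^k)$: (a) proximal gradient step: if $I^{k\varepsilon}_0\neq\emptyset$ and $g^\varepsilon(x^k)_i\neq0$ for some $i\in I^{k\varepsilon}_0$, set $x^{k+1}=\mathrm{prox}_{\frac\lambda{\beta^{j_k}}\|\cdot\|_1}(x^k-\beta^{-j_k}\nabla f(x^k))$ with $j_k$ the smallest nonnegative $j$ such that $\varphi(\mathrm{prox}_{\frac\lambda{\beta^j}\|\cdot\|_1}(x^k-\beta^{-j}\nabla f(x^k)))<\varphi(x^k)-\frac{\bar\eta}{\beta^j}\|\mathcal{G}_{\beta^j}(x^k)\|^2$; (b) Newton-CG step: else if $I^{k\varepsilon}_{\neq0}\neq\emptyset$ and $\|g^\varepsilon(x^k)_{I^{k\varepsilon}_{\neq0}}\|\neq0$: with $H=(\nabla^2f(x^k))_{I^{k\varepsilon}_{\neq0}}$, $g=g^\varepsilon(x^k)_{I^{k\varepsilon}_{\neq0}}$, $\tau_k\in[\frac{2\varepsilon_h}{\|g\|^\delta},\frac{2\hat\tau\varepsilon_h}{\|g\|^\delta}]$, call Capped CG$(H,g,\varepsilon_h,\zeta,\delta,\tau_k,M)$ to get $(d,d_{\rm type})$; $d^k=0$ on $I^{k\varepsilon}_0$, and on $I^{k\varepsilon}_{\neq0}$ equals $-\mathrm{sgn}(d^\top g)\frac{|d^\top Hd|}{\|d\|^2}\frac d{\|d\|}$ if NC, $d$ if SOL; $x^{k+1}=x^k+\theta^{j_k}d^k$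 with $j_k$ the smallest nonnegative $j$ such that $\varphi(x^k+\theta^jd^k)<\varphi(x^k)-\eta\theta^{2j}\varepsilon_h\|d^k\|^2$. (No second-order phase is performed.) *)

From mathcomp Require Import all_boot all_order all_algebra.
From mathcomp Require Import all_classical all_reals all_analysis.
Import Order.TTheory GRing.Theory Num.Theory.
Import numFieldNormedType.Exports.
Set Implicit Arguments. Unset Strict Implicit. Unset Printing Implicit Defensive.
Local Open Scope ring_scope.
Local Open Scope classical_set_scope.

Section FPGN2CM.
Variable R : realType.

Definition dotv m (u v : 'cV[R]_m) : R := \sum_i u i 0 * v i 0.
Definition norm2 m (v : 'cV[R]_m) : R := Num.sqrt (\sum_i v i 0 ^+ 2).
Definition norm1 m (v : 'cV[R]_m) : R := \sum_i `|v i 0|.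
Definition sgn (r : R) : R := if 0 <= r then 1 else -1.

Definition gradf n (f : 'cV[R]_n -> R) (x : 'cV[R]_n) : 'cV[R]_n :=
  \col_i ('d f x (delta_mx i 0 : 'cV[R]_n)).
Definition hessf n (f : 'cV[R]_n -> R) (x : 'cV[R]_n) : 'M[R]_n :=
  \matrix_(i, j) ('d (gradf f) x (delta_mx j 0 : 'cV[R]_n)) i 0.

Definition is_prox_l1 n (c : R) (z u : 'cV[R]_n) : Prop :=
  forall w : 'cV[R]_n,
    c * norm1 u + (norm2 (u - z)) ^+ 2 / 2 <= c * norm1 w + (norm2 (w - z)) ^+ 2 / 2.
Definition prox_l1 n (c : R) (z : 'cV[R]_n) : 'cV[R]_n :=
  xget 0 [set u | is_prox_l1 c z u].

Section CappedCG.
Variables (m : nat) (H : 'M[R]_m) (g : 'cV[R]_m)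
  (eps zeta delta taubar M0 : R).

Definition ccg_Hbar : 'M[R]_m := H + (taubar * powR (norm2 g) delta)%:M.
Definition ccg_kappa (M : R) : R := (M + taubar * powR (norm2 g) delta) / eps.
Definition ccg_zhat (M : R) : R := zeta / (3 * ccg_kappa M).
Definition ccg_tau (M : R) : R :=
  Num.sqrt (ccg_kappa M) / (Num.sqrt (ccg_kappa M) + 1).
Definition ccg_T (M : R) : R :=
  4 * ccg_kappa M ^+ 4 / (1 - Num.sqrt (ccg_tau M)) ^+ 2.
Definition ccg_updM (M : R) (v : 'cV[R]_m) : R :=
  if norm2 (H *m v) > M * norm2 v then norm2 (H *m v) / norm2 v else M.
Definition ccg_negc (v : 'cV[R]_m) : bool :=
  dotv v (ccg_Hbar *m v) < eps * norm2 v ^+ 2.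

Definition ccg_state := ('cV[R]_m * 'cV[R]_m * 'cV[R]_m * R)%type.
Definition st_y (s : ccg_state) := s.1.1.1.
Definition st_r (s : ccg_state) := s.1.1.2.
Definition st_p (s : ccg_state) := s.1.2.
Definition st_M (s : ccg_state) := s.2.

Definition ccg_alpha (s : ccg_state) : R :=
  norm2 (st_r s) ^+ 2 / dotv (st_p s) (ccg_Hbar *m st_p s).
Definition ccg_ynext (s : ccg_state) : 'cV[R]_m :=
  st_y s + ccg_alpha s *: st_p s.

(* initial state after the j = 0 tests (M possibly updated with p_0) *)
Definition ccg_init : ccg_state := (0, g, - g, ccg_updM M0 (- g)).
Definition ccg_step (s : ccg_state) : ccg_state :=
  let a := ccg_alpha s in
  let y' := st_y s + a *: st_p s in
  let r' := st_r s + a *: (ccg_Hbar *m st_p s) in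
  let b := norm2 r' ^+ 2 / norm2 (st_r s) ^+ 2 in
  let p' := - r' + b *: st_p s in
  let M' := ccg_updM (ccg_updM (ccg_updM (st_M s) p') y') r' in
  (y', r', p', M').
Definition ccg_st (j : nat) : ccg_state := iter j ccg_step ccg_init.

Definition ccg_stops (j : nat) : bool :=
  let s := ccg_st j in
  [|| ccg_negc (st_y s),
      norm2 (st_r s) <= ccg_zhat (st_M s) * norm2 g,
      ccg_negc (st_p s) |
      norm2 (st_r s) >
        Num.sqrt (ccg_T (st_M s)) * Num.sqrt (ccg_tau (st_M s)) ^+ j * norm2 g].

(* output of the tests at iteration j; NC is encoded by true, SOL by false *)
Definition ccg_out (j : nat) (d : 'cV[R]_m) (nc : bool) : Prop :=
  let s := ccg_st j in
  if ccg_negc (st_y s) then d = st_y s /\ nc = true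
  else if norm2 (st_r s) <= ccg_zhat (st_M s) * norm2 g then d = st_y s /\ nc = false
  else if ccg_negc (st_p s) then d = st_p s /\ nc = true
  else if norm2 (st_r s) >
        Num.sqrt (ccg_T (st_M s)) * Num.sqrt (ccg_tau (st_M s)) ^+ j * norm2 g then
    exists i, (i < j)%N /\
      ccg_negc (ccg_ynext s - st_y (ccg_st i)) /\
      d = ccg_ynext s - st_y (ccg_st i) /\ nc = true
  else False.

Definition capped_cg (d : 'cV[R]_m) (nc : bool) : Prop :=
  (ccg_negc (- g) /\ d = - g /\ nc = true) \/
  (~~ ccg_negc (- g) /\
   exists j, (0 < j)%N /\ (forall j', (0 < j' < j)%N -> ~~ ccg_stops j') /\
             ccg_out j d nc).
End CappedCG.

Section Alg.
Variables (n : nat) (f : 'cV[R]_n -> R) (lam : R).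
Variables (epsg beta delta tauhat zeta etabar eta theta : R).

Definition epsh : R := Num.sqrt epsg.
Definition phi (x : 'cV[R]_n) : R := f x + lam * norm1 x.

Definition Gmap (t : R) (x : 'cV[R]_n) : 'cV[R]_n :=
  t *: (x - prox_l1 (lam / t) (x - t^-1 *: gradf f x)).

Definition I0 (x : 'cV[R]_n) : {set 'I_n} := [set i | `|x i 0| <= Num.sqrt epsg].
Definition Inz (x : 'cV[R]_n) : {set 'I_n} := [set i | `|x i 0| > Num.sqrt epsg].

Definition geps (x : 'cV[R]_n) : 'cV[R]_n :=
  \col_i (if x i 0 > Num.sqrt epsg then gradf f x i 0 + lam
          else if x i 0 < - Num.sqrt epsg then gradf f x i 0 - lam
          else gradf f x i 0 -
               Order.min (Order.max (- lam - powR epsg (3/4)) (gradf f x i 0))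
                         (lam + powR epsg (3/4))).

Definition sub_idx (S : {set 'I_n}) (i : 'I_#|S|) : 'I_n := enum_val i.
Definition subv (S : {set 'I_n}) (v : 'cV[R]_n) : 'cV[R]_#|S| :=
  \col_i v (sub_idx i) 0.
Definition subm (S : {set 'I_n}) (A : 'M[R]_n) : 'M[R]_#|S| :=
  \matrix_(i, j) A (sub_idx i) (sub_idx j).

Definition condPG (x : 'cV[R]_n) : bool :=
  (I0 x != finset.set0) && [exists i, (i \in I0 x) && (geps x i 0 != 0)].
Definition condNCG (x : 'cV[R]_n) : bool :=
  (Inz x != finset.set0) && (norm2 (subv (Inz x) (geps x)) != 0).

Definition pg_trial (x : 'cV[R]_n) (j : nat) : 'cV[R]_n :=
  prox_l1 (lam / beta ^+ j) (x - (beta ^+ j)^-1 *: gradf f x).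
Definition pg_accept (x : 'cV[R]_n) (j : nat) : bool :=
  phi (pg_trial x j) < phi x - etabar / beta ^+ j * norm2 (Gmap (beta ^+ j) x) ^+ 2.
Definition pg_step (x x' : 'cV[R]_n) : Prop :=
  exists jk : nat, pg_accept x jk /\ (forall j, (j < jk)%N -> ~~ pg_accept x j) /\
    x' = pg_trial x jk.

Definition ncg_step (x x' : 'cV[R]_n) : Prop :=
  let S := Inz x in
  let H := subm S (hessf f x) in
  let g := subv S (geps x) in
  exists (M tauk : R) (d : 'cV[R]_#|S|) (nc : bool) (dk : 'cV[R]_n),
    0 <= M /\
    2 * epsh / powR (norm2 g) delta <= tauk <= 2 * tauhat * epsh / powR (norm2 g) delta /\
    capped_cg H g epsh zeta delta tauk M d nc /\
    (forall i, i \notin S -> dk i 0 = 0) /\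
    subv S dk = (if nc then
                   (- sgn (dotv d g) * `|dotv d (H *m d)| / norm2 d ^+ 2 / norm2 d) *: d
                 else d) /\
    exists jk : nat,
      phi (x + theta ^+ jk *: dk) < phi x - eta * theta ^+ (2 * jk) * epsh * norm2 dk ^+ 2 /\
      (forall j, (j < jk)%N ->
         ~ (phi (x + theta ^+ j *: dk) < phi x - eta * theta ^+ (2 * j) * epsh * norm2 dk ^+ 2)) /\
      x' = x + theta ^+ jk *: dk.

(* {x^k} is generated by FPGN2CM from x0.  If neither branch applies at x^k
   the algorithm stops (no second-order phase), and later terms are unconstrained. *)
Definition fpgn2cm_seq (x0 : 'cV[R]_n) (x : nat -> 'cV[R]_n) : Prop :=
  x 0%N = x0 /\
  forall k : nat,
    if condPG (x k) then pg_step (x k) (x k.+1)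
    else if condNCG (x k) then ncg_step (x k) (x k.+1)
    else True.

(* iteration k is actually performed (the algorithm has not stopped at x^0..x^k) *)
Definition fpgn2cm_runs (x : nat -> 'cV[R]_n) (k : nat) : Prop :=
  forall j, (j <= k)%N -> condPG (x j) || condNCG (x j).
End Alg.
End FPGN2CM.

From mathcomp Require Import all_boot all_order all_algebra.
From mathcomp Require Import all_classical all_reals all_analysis.
From mathcomp Require Import ring lra.
Import Order.TTheory GRing.Theory Num.Theory.
Import numFieldNormedType.Exports.
Local Open Scope ring_scope.
Local Open Scope classical_set_scope.
Set Implicit Arguments. Unset Strict Implicit.

(* The proximal-gradient trial point u with step 1/t is a soft thresholding,
   whose optimality gives the model decrease
     lam (|u|_1 - |y|_1) + <grad f y, u - y> <= - t |u - y|^2.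
   Along [y, u] the gradient is Lipschitz (the segment cannot leave the open
   neighbourhood U of the sublevel set, as phi stays below phi y on it), so
   phi u <= phi y - (t - n L) |u - y|^2 and the Armijo test holds as soon as
   n L < t (1 - etabar): backtracking always stops before a fixed J.  When the
   proximal-gradient branch is taken some |d_i f| exceeds lam + epsg^(3/4),
   so |G_t| > epsg^(3/4) and phi drops by at least etabar epsg^(3/2) / beta^J,
   while Newton-CG steps never increase phi.  As phi is bounded below, that
   branch is taken only finitely often. *)

Section SoftThreshold.
Variable R : realType.

Definition soft_threshold (c z : R) : R :=
  if c < z then z - c else if z < - c then z + c else 0.

Lemma soft_threshold_optimality (c z w : R) : 0 <= c ->
  c * `|soft_threshold c z| - c * `|w|
    <= (soft_threshold c z - z) * (w - soft_threshold c z).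
Proof.
rewrite /soft_threshold => c0.
case: ltP => z_gt; [|case: ltP => z_lt].
- rewrite (ger0_norm (_ : 0 <= z - c)); last by lra.
  by case: (lerP 0 w) => w0; rewrite ?(ger0_norm w0) ?(ltr0_norm w0); nra.
- rewrite (ltr0_norm (_ : z + c < 0)); last by lra.
  by case: (lerP 0 w) => w0; rewrite ?(ger0_norm w0) ?(ltr0_norm w0); nra.
- rewrite normr0 mulr0.
  by case: (lerP 0 w) => w0; rewrite ?(ger0_norm w0) ?(ltr0_norm w0); nra.
Qed.

Lemma soft_threshold_dist (c z : R) : 0 <= c -> `|z - soft_threshold c z| <= c.
Proof.
rewrite /soft_threshold ler_norml => c0.
by case: ltP => z_gt; [|case: ltP => z_lt]; apply/andP; split; lra.
Qed.

Lemma soft_threshold_step_ge (lam t a g : R) : 0 <= lam -> 0 < t ->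
  `|g| - lam <= `|t * (a - soft_threshold (lam / t) (a - t^-1 * g))|.
Proof.
move=> lam0 t0; set z := a - t^-1 * g; set u := soft_threshold _ z.
have -> : t * (a - u) = g + t * (z - u).
  by rewrite /z; field; rewrite gt_eqF.
have : `|t * (z - u)| <= lam.
  rewrite normrM gtr0_norm // -ler_pdivlMl // mulrC.
  by apply: soft_threshold_dist; rewrite divr_ge0 // ltW.
have := lerB_normD g (t * (z - u)); lra.
Qed.

Lemma soft_threshold_model_decrease (lam t a g : R)
    (u := soft_threshold (lam / t) (a - t^-1 * g)) : 0 <= lam -> 0 < t ->
  lam * `|u| - lam * `|a| + g * (u - a) <= - (t * (u - a) ^+ 2).
Proof.
move=> lam0 t0.
have := soft_threshold_optimality (a - t^-1 * g) a (divr_ge0 lam0 (ltW t0)).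
rewrite -/u => /(ler_wpM2l (ltW t0)).
have -> : t * (lam / t * `|u| - lam / t * `|a|) = lam * `|u| - lam * `|a|.
  by field; rewrite gt_eqF.
have -> : t * ((u - (a - t^-1 * g)) * (a - u))
    = - (t * (u - a) ^+ 2) - g * (u - a).
  by field; rewrite gt_eqF.
lra.
Qed.

End SoftThreshold.

Section SoftThresholdVector.
Variables (R : realType) (m : nat).
Implicit Types (c : R) (v w z : 'cV[R]_m).

Lemma norm2_sqr v : norm2 v ^+ 2 = \sum_i v i 0 ^+ 2.
Proof. by rewrite sqr_sqrtr // sumr_ge0 // => i _; rewrite sqr_ge0. Qed.

Lemma norm2_eq0 v : norm2 v = 0 -> v = 0.
Proof.
move=> /(congr1 (fun r => r ^+ 2)); rewrite norm2_sqr expr0n /= => /eqP.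
rewrite psumr_eq0 => [/allP v0|i _]; last exact: sqr_ge0.
apply/matrixP => i j; rewrite (ord1 j) mxE.
by have /implyP/(_ isT) := v0 i (mem_index_enum i); rewrite sqrf_eq0 => /eqP.
Qed.

Lemma norm2_sqrZ (a : R) v : norm2 (a *: v) ^+ 2 = a ^+ 2 * norm2 v ^+ 2.
Proof.
by rewrite !norm2_sqr mulr_sumr; apply: eq_bigr => i _; rewrite !mxE exprMn.
Qed.

Definition soft_thresholdv c z : 'cV[R]_m := \col_i soft_threshold c (z i 0).

Lemma soft_thresholdv_strongly_optimal c z w (s := soft_thresholdv c z) :
  0 <= c ->
  c * norm1 s + norm2 (s - z) ^+ 2 / 2 + norm2 (w - s) ^+ 2 / 2
    <= c * norm1 w + norm2 (w - z) ^+ 2 / 2.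
Proof.
move=> c0; rewrite !norm2_sqr /norm1 !mulr_sumr !mulr_suml -!big_split /=.
apply: ler_sum => i _; rewrite !mxE.
have := soft_threshold_optimality (z i 0) (w i 0) c0; nra.
Qed.

(* [prox_l1] is a choice; strong optimality makes the minimiser unique. *)
Lemma prox_l1E c z : 0 <= c -> prox_l1 c z = soft_thresholdv c z.
Proof.
move=> c0; set s := soft_thresholdv c z.
have s_prox : is_prox_l1 c z s.
  move=> w; have := soft_thresholdv_strongly_optimal z w c0.
  have : 0 <= norm2 (w - s) ^+ 2 / 2 by rewrite divr_ge0 // sqr_ge0.
  lra.
have /= p_prox := xgetPex 0 (ex_intro _ s s_prox).
apply/eqP; rewrite -subr_eq0; apply/eqP/norm2_eq0.
move: (p_prox s) (soft_thresholdv_strongly_optimal z (prox_l1 c z) c0).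
rewrite -/s -/(prox_l1 c z) => prox_le s_le.
have sqr_le0 : norm2 (prox_l1 c z - s) ^+ 2 <= 0 by lra.
by apply/eqP; rewrite -sqrf_eq0 eq_le sqr_le0 sqr_ge0.
Qed.

Lemma soft_thresholdv_model_decrease (lam t : R) (y g : 'cV[R]_m)
    (u := soft_thresholdv (lam / t) (y - t^-1 *: g)) : 0 <= lam -> 0 < t ->
  lam * (norm1 u - norm1 y) + dotv g (u - y) <= - (t * norm2 (u - y) ^+ 2).
Proof.
move=> lam0 t0; rewrite norm2_sqr /norm1 /dotv -sumrB mulr_sumr mulr_sumr.
rewrite -big_split /= -sumrN; apply: ler_sum => i _; rewrite !mxE.
have := soft_threshold_model_decrease (y i 0) (g i 0) lam0 t0; lra.
Qed.

End SoftThresholdVector.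

Section MatrixNorms.
Variables (R : realType) (m : nat).
Implicit Types (v w : 'cV[R]_m).

Lemma entry_le_mx_norm v i : `|v i 0| <= `|v|.
Proof.
rewrite [X in _ <= X]/Num.norm /= mx_normrE.
exact: (le_bigmax _ (fun ij : 'I_m * 'I_1 => `|v ij.1 ij.2|) (i, 0)).
Qed.

Lemma mx_norm_sqr_le_norm2 v : `|v| ^+ 2 <= norm2 v ^+ 2.
Proof.
rewrite norm2_sqr; have [->|/mx_norm_neq0 [[i j] /= vi]] := eqVneq `|v| 0.
  by rewrite expr0n /= sumr_ge0 // => i _; rewrite sqr_ge0.
have -> : `|v| = `|v i 0| by rewrite [LHS]vi (ord1 j).
rewrite real_normK ?num_real // (bigD1 i) //= lerDl.
by rewrite sumr_ge0 // => k _; rewrite sqr_ge0.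
Qed.

Lemma dotv_le_mx_norm v w : dotv v w <= m%:R * `|v| * `|w|.
Proof.
apply: (@le_trans _ _ (\sum_(i < m) `|v| * `|w|)); last first.
  by rewrite sumr_const card_ord -mulrA mulr_natl.
apply: ler_sum => i _; apply: le_trans (ler_norm _) _.
by rewrite normrM ler_pM // entry_le_mx_norm.
Qed.

Lemma dotvBl (u v w : 'cV[R]_m) : dotv (u - v) w = dotv u w - dotv v w.
Proof. by rewrite /dotv -sumrB; apply: eq_bigr => i _; rewrite !mxE mulrBl. Qed.

End MatrixNorms.

Section Differentiation.
Variables (R : realType) (n : nat) (f : 'cV[R]_n -> R).

Lemma diff_dotv_gradf (a v : 'cV[R]_n) : 'd f a v = dotv (gradf f a) v.
Proof.
have v_sum : v = \sum_i v i 0 *: (delta_mx i 0 : 'cV[R]_n).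
  by rewrite {1}(matrix_sum_delta v); apply: eq_bigr => i _; rewrite big_ord1.
rewrite {1}v_sum linear_sum /dotv; apply: eq_bigr => i _.
by rewrite linearZ /= /gradf mxE mulrC.
Qed.

Hypothesis f_diff : forall z, differentiable f z.

Lemma is_derive_line (y d : 'cV[R]_n) (r : R) :
  is_derive r 1 (fun s => f (y + s *: d)) (dotv (gradf f (y + r *: d)) d).
Proof.
have E : (fun s : R => s^-1 *: (((fun s => f (y + s *: d)) \o shift r) (s *: 1)
           - f (y + r *: d)))
       = (fun s => s^-1 *: ((f \o shift (y + r *: d)) (s *: d) - f (y + r *: d))).
  apply: funext => s /=; congr (_ *: (f _ - _)).
  by rewrite scalerDl /GRing.scale /= mulr1 addrCA addrC.
have fd : derivable f (y + r *: d) d by apply: diff_derivable.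
apply: DeriveDef; first by rewrite /derivable E.
by rewrite /derive E -/(derive f _ _) deriveE // diff_dotv_gradf.
Qed.

Lemma continuous_line (y d : 'cV[R]_n) : continuous (fun s : R => f (y + s *: d)).
Proof.
move=> r; apply: differentiable_continuous; apply/derivable1_diffP.
by case: (is_derive_line y d r).
Qed.

End Differentiation.

Section RealDescent.
Variable R : realType.

Lemma descent_lemma_real (g g' : R -> R) (M s : R) :
  (forall r : R, is_derive r 1 g (g' r)) -> 0 <= M -> 0 <= s ->
  (forall r, 0 < r < s -> g' r - g' 0 <= M * r) ->
  g s <= g 0 + s * g' 0 + M * s ^+ 2.
Proof.
move=> g_der M_ge0 s_ge0 g'_le; have [->|s_neq0] := eqVneq s 0.
  by rewrite mul0r expr0n /= mulr0 !addr0.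
have s_gt0 : 0 < s by rewrite lt_def s_neq0.
have g_cont : {within `[0, s], continuous g}.
  apply: continuous_subspaceT => r; apply: differentiable_continuous.
  by apply/derivable1_diffP; case: (g_der r).
have [c c_in mvt] := MVT s_gt0 (fun r _ => g_der r) g_cont.
have /andP [c_gt0 c_lts] : 0 < c < s by move: c_in; rewrite in_itv.
have := ler_wpM2r s_ge0 (g'_le c (introT andP (conj c_gt0 c_lts))).
have : M * c * s <= M * s * s by rewrite ler_wpM2r // ler_wpM2l // ltW.
rewrite subr0 in mvt; rewrite expr2; lra.
Qed.

End RealDescent.

Section LipschitzGradient.
Variables (R : realType) (n : nat) (f : 'cV[R]_n -> R) (U : set 'cV[R]_n) (L : R).
Hypothesis f_diff : forall z, differentiable f z.
Hypothesis gradf_lip :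
  forall a b, U a -> U b -> `|gradf f a - gradf f b| <= L * `|a - b|.

(* [`|_|] is the sup norm on matrices, whence the factor [n] (see
   [dotv_le_mx_norm]). *)
Lemma descent_lemma (y d : 'cV[R]_n) (s : R) :
  0 <= s -> (forall r, 0 <= r <= s -> U (y + r *: d)) ->
  f (y + s *: d)
    <= f y + s * dotv (gradf f y) d + n%:R * `|L| * norm2 d ^+ 2 * s ^+ 2.
Proof.
move=> s_ge0 seg_U; have U_y : U y.
  by have := seg_U 0; rewrite scale0r addr0; apply; rewrite lexx.
have M_ge0 : 0 <= n%:R * `|L| * norm2 d ^+ 2.
  by rewrite mulr_ge0 ?sqr_ge0 // mulr_ge0.
suff : forall r, 0 < r < s -> dotv (gradf f (y + r *: d)) d
    - dotv (gradf f (y + 0 *: d)) d <= n%:R * `|L| * norm2 d ^+ 2 * r.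
  move/(descent_lemma_real (is_derive_line f_diff y d) M_ge0 s_ge0) => /=.
  by rewrite scale0r addr0.
move=> r /andP [r_gt0 r_lts]; rewrite scale0r addr0 -dotvBl.
have w_le : `|gradf f (y + r *: d) - gradf f y| <= `|L| * r * `|d|.
  apply: le_trans (gradf_lip (seg_U r _) U_y) _; first by rewrite !ltW.
  rewrite addrC addKr normrZ gtr0_norm // mulrA.
  by rewrite ler_wpM2r // ler_wpM2r ?ler_norm // ltW.
apply: le_trans (dotv_le_mx_norm _ _) _; rewrite -!mulrA ler_wpM2l //.
have Lr_ge0 : 0 <= `|L| * r by rewrite mulr_ge0 // ltW.
have := mx_norm_sqr_le_norm2 d; have := normr_ge0 d; nra.
Qed.

End LipschitzGradient.

Section ContinuousInduction.
Variable R : realType.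

Lemma continuous_le_at_left (G : R -> R) (a s c : R) : {for s, continuous G} ->
  a < s -> (forall r, a <= r < s -> G r <= c) -> G s <= c.
Proof.
move=> G_cont a_lts G_le.
apply: (closed_cvg (F := s^'-) _ (@closed_le _ c)); last first.
  exact: cvg_at_left_filter G_cont.
exists (s - a) => [|r /= r_near r_lts]; first by rewrite /= subr_gt0.
apply: G_le; rewrite r_lts andbT.
by move: r_near; rewrite /ball /= gtr0_norm ?subr_gt0 //; lra.
Qed.

Lemma interval_induction (P : R -> Prop) :
  (forall s, 0 <= s <= 1 -> (forall r, 0 <= r < s -> P r) ->
     \forall r \near s, P r) ->
  forall r, 0 <= r <= 1 -> P r.
Proof.
move=> P_step.
pose E := [set s : R | 0 <= s <= 1 /\ forall r, 0 <= r < s -> P r].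
have E0 : E 0 by split=> [|r]; [rewrite lexx ler01 | lra].
have E_sup : has_sup E by split; [exists 0 | exists 1 => s [/andP []]].
set ss := sup E.
have ss_ge0 : 0 <= ss := sup_upper_bound E_sup E0.
have ss_le1 : ss <= 1 by apply: ge_sup => [|s [/andP []]]; first by exists 0.
have P_below : forall r, 0 <= r < ss -> P r.
  move=> r /andP [r_ge0 r_lt].
  have ss_r : 0 < ss - r by rewrite subr_gt0.
  have [s [_ Ps] ss_s] := sup_adherent ss_r E_sup.
  by apply: Ps; rewrite r_ge0 /=; move: ss_s; rewrite -/ss; lra.
have ss01 : 0 <= ss <= 1 by rewrite ss_ge0 ss_le1.
have /nbhs_ballP [e /= e_gt0 P_ball] := P_step ss ss01 P_below.
have ss_e : 1 < ss + e / 2.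
  rewrite ltNge; apply/negP => ss_e_le1; suff : E (ss + e / 2).
    by move=> /(sup_upper_bound E_sup); rewrite -/ss; lra.
  split=> [|r /andP [r_ge0 r_lt]]; first by apply/andP; split; lra.
  have [r_ltss|r_gess] := ltP r ss; first by apply: P_below; rewrite r_ge0.
  by apply: P_ball; rewrite /ball /= ler0_norm; lra.
move=> r /andP [r_ge0 r_le1]; have [r_ltss|r_gess] := ltP r ss.
  by apply: P_below; rewrite r_ge0.
by apply: P_ball; rewrite /ball /= ler0_norm; lra.
Qed.

End ContinuousInduction.

Section L1NormOnLines.
Variables (R : realType) (m : nat) (y d : 'cV[R]_m).

Lemma continuous_norm1_line : continuous (fun r : R => norm1 (y + r *: d)).
Proof.
apply: continuous_big => [|i _ r]; first exact: add_continuous.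
rewrite (_ : (fun s => _) = fun s => `|y i 0 + s * d i 0|); last first.
  by apply/funext => s; rewrite !mxE.
by apply: cvg_norm; apply: cvgD; [exact: cvg_cst | apply: cvgMl; exact: cvg_id].
Qed.

Lemma norm1_line_convex (s : R) : 0 <= s <= 1 ->
  norm1 (y + s *: d) <= norm1 y + s * (norm1 (y + d) - norm1 y).
Proof.
move=> /andP [s_ge0 s_le1].
rewrite (_ : norm1 y + _ = (1 - s) * norm1 y + s * norm1 (y + d)); last by ring.
rewrite /norm1 !mulr_sumr -big_split /=; apply: ler_sum => i _; rewrite !mxE.
have -> : y i 0 + s * d i 0 = (1 - s) * y i 0 + s * (y i 0 + d i 0) by ring.
apply: le_trans (ler_normD _ _) _.
by rewrite !normrM (ger0_norm s_ge0) ger0_norm ?subr_ge0.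
Qed.

End L1NormOnLines.

Section CompositeDescent.
Variables (R : realType) (n : nat) (f : 'cV[R]_n -> R) (lam : R).
Variables (U : set 'cV[R]_n) (L c0 : R).
Hypothesis f_diff : forall z, differentiable f z.
Hypothesis gradf_lip :
  forall a b, U a -> U b -> `|gradf f a - gradf f b| <= L * `|a - b|.
Hypothesis U_open : open U.
Hypothesis sublevel_U : forall z, phi f lam z <= c0 -> U z.
Hypothesis lam_ge0 : 0 <= lam.

Lemma phi_line_le (y d : 'cV[R]_n) (t s : R) :
  lam * (norm1 (y + d) - norm1 y) + dotv (gradf f y) d <= - (t * norm2 d ^+ 2) ->
  0 <= s <= 1 -> (forall r, 0 <= r <= s -> U (y + r *: d)) ->
  phi f lam (y + s *: d)
    <= phi f lam y - s * t * norm2 d ^+ 2 + n%:R * `|L| * norm2 d ^+ 2 * s ^+ 2.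
Proof.
move=> model s01 seg_U; have /andP [s_ge0 _] := s01.
have f_le := descent_lemma f_diff gradf_lip s_ge0 seg_U.
have /(ler_wpM2l lam_ge0) norm1_le := norm1_line_convex y d s01.
have /(ler_wpM2l s_ge0) model_s := model.
rewrite /phi; nra.
Qed.

Lemma phi_sufficient_decrease (y d : 'cV[R]_n) (t : R) :
  lam * (norm1 (y + d) - norm1 y) + dotv (gradf f y) d <= - (t * norm2 d ^+ 2) ->
  n%:R * `|L| <= t -> phi f lam y <= c0 ->
  phi f lam (y + d) <= phi f lam y - (t - n%:R * `|L|) * norm2 d ^+ 2.
Proof.
move=> model K_le_t y_c0.
have D_ge0 : 0 <= norm2 d ^+ 2 := sqr_ge0 _.
have phi_le : forall s, 0 <= s <= 1 ->
    (forall r, 0 <= r <= s -> U (y + r *: d)) ->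
    phi f lam (y + s *: d) <= phi f lam y.
  move=> s s01 seg_U; have := phi_line_le model s01 seg_U.
  have /andP [s_ge0 s_le1] := s01.
  have : n%:R * `|L| * s ^+ 2 <= s * t.
    by rewrite expr2 mulrA mulrC ler_wpM2l // (le_trans _ K_le_t) // ler_piMr.
  move=> /(ler_wpM2r D_ge0); lra.
have phi_cont : continuous (fun r : R => phi f lam (y + r *: d)).
  move=> r; apply: cvgD; first exact: continuous_line.
  by apply: cvgM; [exact: cvg_cst | exact: continuous_norm1_line].
(* While the segment stays in U, phi stays below phi y <= c0; the sublevel set
   is closed, so the segment can never reach the boundary of U. *)
have seg_U : forall r, 0 <= r <= 1 -> U (y + r *: d).
  apply: interval_induction => s /andP [s_ge0 s_le1] below.
  have phi_s : phi f lam (y + s *: d) <= phi f lam y.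
    have [->|s_neq0] := eqVneq s 0; first by rewrite scale0r addr0.
    apply: (continuous_le_at_left (a := 0) (phi_cont s)).
      by rewrite lt_def s_neq0.
    move=> r /andP [r_ge0 r_lts]; apply: phi_le => [|r' /andP [r'_ge0 r'_le]].
      by rewrite r_ge0 /=; lra.
    by apply: below; rewrite r'_ge0 /=; lra.
  have line_cvg : (fun r : R => y + r *: d) @ s --> y + s *: d.
    by apply: cvgD; [exact: cvg_cst | apply: cvgZl; exact: cvg_id].
  apply: line_cvg; apply: open_nbhs_nbhs; split=> //.
  by apply: sublevel_U; apply: le_trans y_c0.
have one01 : 0 <= (1 : R) <= 1 by rewrite ler01 /=.
have := phi_line_le model one01 seg_U.
rewrite scale1r expr1n !mul1r mulr1; lra.
Qed.

End CompositeDescent.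

Section ProximalGradientStep.
Variables (R : realType) (n : nat) (f : 'cV[R]_n -> R) (lam epsg : R).
Hypothesis lam_ge0 : 0 <= lam.

Lemma condPG_gradf_gt (y : 'cV[R]_n) : condPG f lam epsg y ->
  exists i, lam + powR epsg (3/4) < `|gradf f y i 0|.
Proof.
case/andP => _ /existsP [i /andP []].
rewrite inE mxE ler_norml => /andP [yi_ge yi_le].
rewrite !ltNge yi_le yi_ge /=; set e := powR epsg (3/4).
move=> gi_neq0; exists i; rewrite ltNge; apply: contra gi_neq0.
rewrite ler_norml => /andP [gi_ge gi_le].
by rewrite max_r ?min_l ?subrr //; lra.
Qed.

Lemma GmapE (t : R) (y : 'cV[R]_n) : 0 < t ->
  Gmap f lam t y = t *: (y - soft_thresholdv (lam / t) (y - t^-1 *: gradf f y)).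
Proof. by move=> t_gt0; rewrite /Gmap prox_l1E // divr_ge0 // ltW. Qed.

Lemma Gmap_sqr_gt (t : R) (y : 'cV[R]_n) : 0 < t -> condPG f lam epsg y ->
  powR epsg (3/4) ^+ 2 < norm2 (Gmap f lam t y) ^+ 2.
Proof.
move=> t_gt0 /condPG_gradf_gt [i gi_gt]; set G := Gmap f lam t y.
have Gi_ge : `|gradf f y i 0| - lam <= `|G i 0|.
  rewrite /G GmapE // !mxE; exact: soft_threshold_step_ge.
have e_ge0 : 0 <= powR epsg (3/4) := powR_ge0 _ _.
have : powR epsg (3/4) ^+ 2 < G i 0 ^+ 2.
  have Gi_gt : powR epsg (3/4) < `|G i 0| by lra.
  by rewrite -(real_normK (num_real (G i 0))); nra.
move/lt_le_trans; apply; rewrite norm2_sqr (bigD1 i) //= lerDl.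
by rewrite sumr_ge0 // => j _; rewrite sqr_ge0.
Qed.

End ProximalGradientStep.

Section ProximalGradientDecrease.
Variables (R : realType) (n : nat) (f : 'cV[R]_n -> R) (lam epsg beta etabar : R).
Variables (U : set 'cV[R]_n) (L c0 : R).
Hypothesis f_diff : forall z, differentiable f z.
Hypothesis gradf_lip :
  forall a b, U a -> U b -> `|gradf f a - gradf f b| <= L * `|a - b|.
Hypothesis U_open : open U.
Hypothesis sublevel_U : forall z, phi f lam z <= c0 -> U z.
Hypothesis lam_ge0 : 0 <= lam.
Hypothesis etabar_ge0 : 0 <= etabar.

Lemma pg_accept_large_step (y : 'cV[R]_n) (j : nat) : 0 < beta ^+ j ->
  n%:R * `|L| < beta ^+ j * (1 - etabar) ->
  condPG f lam epsg y -> phi f lam y <= c0 -> pg_accept f lam beta etabar y j.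
Proof.
set t := beta ^+ j => t_gt0 K_lt PG y_c0.
have := Gmap_sqr_gt lam_ge0 t_gt0 PG.
rewrite /pg_accept /pg_trial -/t prox_l1E ?divr_ge0 ?(ltW t_gt0) //.
rewrite GmapE // -opprB scalerN.
set u := soft_thresholdv _ _; rewrite -scaleNr norm2_sqrZ sqrrN => G_gt.
have K_le : n%:R * `|L| <= t.
  have : 0 <= t * etabar by rewrite mulr_ge0 // ltW.
  lra.
have model := soft_thresholdv_model_decrease y (gradf f y) lam_ge0 t_gt0.
have := phi_sufficient_decrease f_diff gradf_lip U_open sublevel_U lam_ge0
  (d := u - y) _ K_le y_c0; rewrite subrKC => /(_ model).
set D := norm2 (u - y) ^+ 2 in G_gt *.
have D_gt0 : 0 < D.
  rewrite -(pmulr_rgt0 _ (exprn_gt0 2 t_gt0)).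
  by apply: le_lt_trans G_gt; rewrite sqr_ge0.
have -> : etabar / t * (t ^+ 2 * D) = etabar * t * D by field; rewrite gt_eqF.
have : etabar * t * D < (t - n%:R * `|L|) * D by rewrite ltr_pM2r //; lra.
lra.
Qed.

Lemma pg_step_decrease (y y' : 'cV[R]_n) (J : nat) : 1 < beta ->
  n%:R * `|L| < beta ^+ J * (1 - etabar) ->
  condPG f lam epsg y -> phi f lam y <= c0 -> pg_step f lam beta etabar y y' ->
  phi f lam y' <= phi f lam y - etabar / beta ^+ J * powR epsg (3/4) ^+ 2.
Proof.
move=> beta_gt1 K_lt PG y_c0 [jk [acc [jk_min ->]]].
have betaX_gt0 k : 0 < beta ^+ k by rewrite exprn_gt0 // (lt_trans ltr01).
have jk_le : (jk <= J)%N.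
  rewrite leqNgt; apply/negP => /jk_min /negP; apply.
  exact: pg_accept_large_step.
have G_gt := Gmap_sqr_gt lam_ge0 (betaX_gt0 jk) PG.
have : etabar / beta ^+ J <= etabar / beta ^+ jk.
  by rewrite ler_wpM2l // lef_pV2 ?posrE // ler_eXn2l.
move=> step_le; have := ler_pM (divr_ge0 etabar_ge0 (ltW (betaX_gt0 J)))
  (sqr_ge0 _) step_le (ltW G_gt).
by move: acc; rewrite /pg_accept; lra.
Qed.

End ProximalGradientDecrease.

Lemma ncg_step_nonincreasing (R : realType) (n : nat) (f : 'cV[R]_n -> R)
    (lam epsg delta tauhat zeta eta theta : R) (y y' : 'cV[R]_n) :
  0 <= eta -> 0 <= theta ->
  ncg_step f lam epsg delta tauhat zeta eta theta y y' ->
  phi f lam y' <= phi f lam y.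
Proof.
move=> eta_ge0 theta_ge0.
move=> [_ [_ [_ [_ [dk [_ [_ [_ [_ [_ [jk [decr [_ ->]]]]]]]]]]]]].
apply/ltW/(lt_le_trans decr); rewrite lerBlDr lerDl /epsh.
by rewrite !mulr_ge0 ?exprn_ge0 ?sqrtr_ge0 ?sqr_ge0.
Qed.

Lemma exists_expr_gt (R : realType) (x b : R) : 1 < b -> exists J, x < b ^+ J.
Proof.
move=> b_gt1; have b1_gt0 : 0 < b - 1 by rewrite subr_gt0.
have bernoulli J : 1 + J%:R * (b - 1) <= b ^+ J.
  elim: J => [|J IH]; first by rewrite mul0r addr0.
  have := mulr_ge0 (mulr_ge0 (ler0n R J) (ltW b1_gt0)) (ltW b1_gt0).
  have := ler_wpM2l (ltW (lt_trans ltr01 b_gt1)) IH.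
  rewrite exprS -natr1; lra.
set J := Num.Def.archi_bound (`|x| / (b - 1)).
have := archi_boundP (divr_ge0 (normr_ge0 x) (ltW b1_gt0)).
rewrite -/J ltr_pdivrMr // => x_lt; exists J.
by have := bernoulli J; have := ler_norm x; lra.
Qed.

Lemma finite_descent_steps (R : realType) (u : nat -> R) (lb dlt : R)
    (A P : pred nat) :
  0 < dlt -> (forall k, lb <= u k) ->
  (forall k, A k -> u k <= u 0 -> u k.+1 <= u k - dlt * (P k)%:R) ->
  exists K, forall k, (K <= k)%N -> (forall j, (j <= k)%N -> A j) -> ~~ P k.
Proof.
move=> dlt_gt0 lb_le step.
pose cnt k := (\sum_(0 <= j < k.+1) P j)%N.
have cnt_ge0 k : 0 <= dlt * (cnt k)%:R by rewrite mulr_ge0 ?ler0n ?ltW.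
have u_cnt k : (forall j, (j <= k)%N -> A j) ->
    u k.+1 <= u 0 - dlt * (cnt k)%:R.
  elim: k => [|k IH] Ak.
    by have := step 0 (Ak 0 (leqnn 0)) (lexx _); rewrite /cnt big_nat1.
  have {IH}IH := IH (fun j jk => Ak j (leqW jk)).
  have u_le : u k.+1 <= u 0 by have := cnt_ge0 k; lra.
  have := step k.+1 (Ak _ (leqnn _)) u_le.
  by rewrite /cnt big_nat_recr //= -/(cnt k) natrD mulrDr; lra.
pose M := Num.Def.archi_bound ((u 0 - lb) / dlt).
have cnt_lt k : (forall j, (j <= k)%N -> A j) -> (cnt k < M)%N.
  move=> /u_cnt u_le; rewrite -(ltr_nat R).
  have bound_ge0 : 0 <= (u 0 - lb) / dlt.
    by rewrite divr_ge0 ?subr_ge0 ?lb_le // ltW.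
  apply: le_lt_trans (archi_boundP bound_ge0); rewrite ler_pdivlMr //.
  by have := lb_le k.+1; lra.
apply: contrapT => noK.
have P_often K : exists2 k, (K <= k)%N & (forall j, (j <= k)%N -> A j) /\ P k.
  apply: contrapT => nk; apply: noK; exists K => k Kk Ak.
  by apply/negP => Pk; apply: nk; exists k.
have cnt_unbounded m : exists2 k, (forall j, (j <= k)%N -> A j) & (m <= cnt k)%N.
  elim: m => [|m [k _ mk]]; first by have [k _ [Ak _]] := P_often 0%N; exists k.
  have [k' kk' [Ak' Pk']] := P_often k.+1; exists k' => //.
  apply: leq_ltn_trans mk _.
  rewrite [X in (_ < X)%N](@big_cat_nat _ _ _ k.+1) ?ltnS ?(ltnW kk') //=.
  by rewrite -addn1 leq_add2l big_nat_recr //= Pk' addn1.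
have [k Ak kM] := cnt_unbounded M.
by have := cnt_lt k Ak; rewrite ltnNge kM.
Qed.

Theorem lemma12 (R : realType) (n : nat) (f : 'cV[R]_n -> R) (lam : R)
  (epsg beta delta tauhat zeta etabar eta theta : R)
  (x0 : 'cV[R]_n) (x : nat -> 'cV[R]_n) :
  0 < lam ->
  (* f is twice continuously differentiable *)
  (forall y, differentiable f y) ->
  (forall y, differentiable (gradf f) y) ->
  continuous (hessf f) ->
  (* the level set L_phi(x0) is bounded *)
  bounded_set [set y | phi f lam y <= phi f lam x0] ->
  (* f is twice uniformly Lipschitz continuously differentiable on an open
     neighbourhood of L_phi(x0) *)
  (exists U : set 'cV[R]_n,
     open U /\ [set y | phi f lam y <= phi f lam x0] `<=` U /\
     exists L : R, forall y z, U y -> U z ->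
       `|gradf f y - gradf f z| <= L * `|y - z| /\
       `|hessf f y - hessf f z| <= L * `|y - z|) ->
  (* phi has a minimizer *)
  (exists xs, forall y, phi f lam xs <= phi f lam y) ->
  (* algorithm parameters *)
  0 < epsg < 1 -> 1 < beta -> 0 <= delta <= 1 -> 1 <= tauhat ->
  0 < zeta < 1 -> 0 < etabar < 1 -> 0 < eta < (1 - zeta) / 2 -> 0 < theta < 1 ->
  fpgn2cm_seq f lam epsg beta delta tauhat zeta etabar eta theta x0 x ->
  exists K : nat, forall k : nat, (K <= k)%N -> fpgn2cm_runs f lam epsg x k ->
    ~~ condPG f lam epsg (x k) && condNCG f lam epsg (x k).
Proof.
move=> lam_gt0 f_diff _ _ _ [U [U_open [sub_U [L lip]]]] [xs xs_min]
  /andP [epsg_gt0 _] beta_gt1 _ _ _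
  /andP [etabar_gt0 etabar_lt1] /andP [eta_gt0 _] /andP [theta_gt0 _]
  [x_0 x_step].
have gradf_lip a b : U a -> U b -> `|gradf f a - gradf f b| <= L * `|a - b|.
  by move=> Ua Ub; case: (lip a b Ua Ub).
have sublevel_U z : phi f lam z <= phi f lam (x 0) -> U z.
  by rewrite x_0; apply: sub_U.
have [J K_lt] := exists_expr_gt (n%:R * `|L| / (1 - etabar)) beta_gt1.
rewrite ltr_pdivrMr ?subr_gt0 // in K_lt.
have beta_gt0 : 0 < beta := lt_trans ltr01 beta_gt1.
have decr_gt0 : 0 < etabar / beta ^+ J * powR epsg (3/4) ^+ 2.
  by rewrite mulr_gt0 ?divr_gt0 ?exprn_gt0 ?powR_gt0.
have step k : condPG f lam epsg (x k) || condNCG f lam epsg (x k) ->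
    phi f lam (x k) <= phi f lam (x 0) -> phi f lam (x k.+1)
      <= phi f lam (x k) - etabar / beta ^+ J * powR epsg (3/4) ^+ 2
                           * (condPG f lam epsg (x k))%:R.
  move: (x_step k); case: ifP => [PG pg _ x_le | _].
    rewrite mulr1.
    by apply: (pg_step_decrease f_diff gradf_lip U_open sublevel_U) => //;
      apply: ltW.
  case: ifP => [_ ncg _ _ | _ _] //; rewrite mulr0 subr0.
  by apply: ncg_step_nonincreasing ncg; apply: ltW.
have [K noPG] := finite_descent_steps (u := fun k => phi f lam (x k))
  (A := fun k => condPG f lam epsg (x k) || condNCG f lam epsg (x k))
  (P := fun k => condPG f lam epsg (x k)) decr_gt0 (fun k => xs_min (x k)) step.
exists K => k Kk runs; move: (runs k (leqnn k)) (noPG k Kk runs).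
by case: (condPG f lam epsg (x k)).
Qed.
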